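(* Let $G_1$ be a graph on $n$ nodes with Laplacian $Q_1$, and let $G_1^c$ be its complement, whose Laplacian is $nI-J-Q_1$ ($J$ the $n\times n$ all-one matrix). For $p\ge0$ let $$Q(p)=\begin{bmatrix} Q_1+npI & -pJ\\ -pJ & nI-J-Q_1+npI\end{bmatrix}$$ (the graph $G_1$ coupled to $G_1^c$ by an $n$-to-$n$ interconnection of weight $p$), with eigenvalues $0=\mu_N(p)\le\mu_{N-1}(p)\le\dots\le\mu_1(p)$, $N=2n$. Define $p^*=\sup\big(\{0\}\cup\{p>0:\ \mu_{N-1}(p)=2np\}\big)$. Then $$p^*=\min\left(\frac{\mu_{n-1}(Q_1)}{n},\ 1-\frac{\mu_1(Q_1)}{n}\right),$$ where $\mu_{n-1}(Q_1)$ and $\mu_1(Q_1)$ are the second smallest and the largest eigenvalue of $Q_1$, respectively.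
   Context: $2np$ is an eigenvalue of $Q(p)$ with eigenvector $[u^T,-u^T]^T$, $u$ the all-one vector; $p^*$ is the structural transition threshold, described in the paper as the coupling beyond which the algebraic connectivity $\mu_{N-1}$ no longer equals $2np$ (formalized here as the supremum). *)

From HB Require Import structures.
From mathcomp Require Import all_boot all_order all_algebra.
From mathcomp Require Import classical_sets reals.
From Stdlib Require Import ClassicalEpsilon.
Set Implicit Arguments. Unset Strict Implicit. Unset Printing Implicit Defensive.
Import Order.TTheory GRing.Theory Num.Theory.
Local Open Scope ring_scope.

Definition simple_graph (n : nat) (e : rel 'I_n) : Prop :=
  symmetric e /\ irreflexive e.

Definition laplacian (R : realType) (n : nat) (e : rel 'I_n) : 'M[R]_n :=
  \matrix_(i, j) (if i == j then (#|[set k | e i k]|)%:R else - ((e i j : nat)%:R)).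

Definition is_spectrum (R : realType) (m : nat) (A : 'M[R]_m) (s : seq R) : Prop :=
  [/\ size s = m, sorted (fun x y => y <= x) s
    & char_poly A = \prod_(x <- s) ('X - x%:P)].

(* The eigenvalues (for real symmetric matrices they all are real, so this
   sequence exists and is unique). *)
Definition eigs (R : realType) (m : nat) (A : 'M[R]_m) : seq R :=
  epsilon (inhabits [::]) (is_spectrum A).

(* mu A k = k-th largest eigenvalue mu_k(A), 1-indexed: mu_1 >= mu_2 >= ... *)
Definition mu (R : realType) (m : nat) (A : 'M[R]_m) (k : nat) : R :=
  (eigs A)`_k.-1.

Definition Jmx (R : realType) (n : nat) : 'M[R]_n := const_mx 1.

Definition Qp (R : realType) (n : nat) (Q1 : 'M[R]_n) (p : R) : 'M[R]_(n + n) :=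
  block_mx (Q1 + (n%:R * p)%:M) (- (p *: Jmx R n))
           (- (p *: Jmx R n)) (n%:R%:M - Jmx R n - Q1 + (n%:R * p)%:M).

Definition pstar (R : realType) (n : nat) (Q1 : 'M[R]_n) : R :=
  sup ([set 0] `|` [set p : R | 0 < p /\ mu (Qp Q1 p) (n + n).-1 = 2 * n%:R * p])%classic.

From HB Require Import structures.
From mathcomp Require Import all_boot all_order all_algebra.
From mathcomp Require Import classical_sets reals.
From mathcomp Require Import ring lra.
From mathcomp.real_closed Require Import complex.
From Stdlib Require Import ClassicalEpsilon.
Import Order.TTheory GRing.Theory Num.Theory.
Local Open Scope ring_scope.
Set Implicit Arguments. Unset Strict Implicit. Unset Printing Implicit Defensive.

(* Real symmetric matrices have split characteristic polynomials (spectral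
   theorem over R[i]), so [eigs] really lists their spectrum.
   As Q_1 has zero row and column sums, conjugating by S = [1 1^T; -1 I] turns
   Q_1 into diag(0, M) and J into diag(n, 0); the spectrum of M is that of Q_1
   with one zero removed.  In X - Q(p) the off-diagonal blocks p J commute
   with the diagonal ones, so det (X - Q(p)) = det (A D - B C), and
   conjugating A D - B C by S splits it: the spectrum of Q(p) consists of 0,
   2np, and l + np, n + np - l for l in the spectrum of M.  The spectrum of a
   Laplacian lies in [0, n], since its quadratic form is
   1/2 sum_ij a_ij (w_i - w_j)^2 <= n |w|^2.  Hence mu_{N-1}(p) = 2np exactly
   when np <= mu_{n-1}(Q_1) and mu_1(Q_1) <= n - np, so the admissible p > 0
   are those up to min (mu_{n-1}(Q_1) / n, 1 - mu_1(Q_1) / n), which is p^*. *)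

Lemma char_poly_conj (F : fieldType) k (P A : 'M[F]_k) : P \in unitmx ->
  char_poly (invmx P *m A *m P) = char_poly A.
Proof.
move=> Pu; rewrite /char_poly /char_poly_mx.
set P' := map_mx polyC P.
have P'u : P' \in unitmx by rewrite map_unitmx.
have XP : invmx P' *m 'X%:M *m P' = ('X%:M : 'M[{poly F}]_k).
  by rewrite mul_mx_scalar -scalemxAl mulVmx // scalemx1.
rewrite !map_mxM map_invmx -/P' -[X in \det (X - _)]XP -mulmxBl -mulmxBr !det_mulmx.
by rewrite mulrC mulrA -det_mulmx mulmxV // det1 mul1r.
Qed.

Lemma char_poly_sym_split (R : rcfType) k (A : 'M[R]_k) : A^T = A ->
  exists s : seq R, char_poly A = \prod_(x <- s) ('X - x%:P).
Proof.
move=> Asym; pose f := real_complex R; set AC := map_mx f A.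
have herm : AC \is hermsymmx.
  apply: realsym_hermsym.
    by apply/is_hermitianmxP; rewrite expr0 scale1r map_mx_id // /AC map_trmx Asym.
  by apply/'forall_forallP => i j; rewrite mxE /f complex_real.
have AC_spectral := orthomx_spectralP (hermitian_normalmx herm).
have d_real := hermitian_spectral_diag_real herm.
set d := spectral_diag AC in AC_spectral d_real.
exists [seq complex.Re (d 0 i) | i <- enum 'I_k].
apply: (@map_poly_inj _ _ f).
rewrite map_char_poly -/AC AC_spectral char_poly_conj ?spectral_unit //.
rewrite char_poly_trig ?diag_mx_is_trig // rmorph_prod big_map big_enum /=.
apply: eq_bigr => i _; rewrite map_polyXsubC mxE eqxx mulr1n.
by have := mxOverP d_real 0 i; case: (d 0 i) => a b; rewrite complex_real => /eqP ->.
Qed.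

Lemma is_spectrum_eigs (R : realType) k (A : 'M[R]_k) : A^T = A ->
  is_spectrum A (eigs A).
Proof.
move=> /char_poly_sym_split [s As]; rewrite /eigs; apply: epsilon_spec.
exists (sort (fun x y => y <= x) s); split.
- have := congr1 (fun p : {poly R} => size p) As.
  rewrite size_char_poly size_prod_XsubC => -[->].
  by rewrite size_sort.
- by apply: sort_sorted => x y; exact: le_total.
- by rewrite As; apply: perm_big; rewrite perm_sym perm_sort.
Qed.

Section PolyComp.
Variable R : comNzRingType.

Lemma comp_prod_XsubC_shift (s : seq R) c :
  (\prod_(x <- s) ('X - x%:P)) \Po ('X - c%:P) = \prod_(x <- s) ('X - (x + c)%:P).
Proof.
elim: s => [|x s IH]; first by rewrite !big_nil rmorph1.
rewrite !big_cons comp_polyM IH comp_polyB comp_polyX comp_polyC polyCD.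
by congr (_ * _); ring.
Qed.

Lemma comp_prod_XsubC_reflect (s : seq R) d :
  (-1) ^+ size s * ((\prod_(x <- s) ('X - x%:P)) \Po (d%:P - 'X)) =
  \prod_(x <- s) ('X - (d - x)%:P).
Proof.
elim: s => [|x s IH]; first by rewrite !big_nil rmorph1 mulr1.
rewrite !big_cons comp_polyM /= exprS -IH comp_polyB comp_polyX comp_polyC polyCB.
ring.
Qed.

Lemma char_poly_comp k (A : 'M[R]_k) (Y : {poly R}) :
  char_poly A \Po Y = \det (Y%:M - map_mx polyC A).
Proof.
rewrite /char_poly -det_map_mx /=; congr determinant; apply/matrixP => i j.
rewrite !mxE comp_polyB comp_polyC.
by case: (i == j); rewrite ?mulr1n ?mulr0n ?comp_poly0 ?comp_polyX.
Qed.

Lemma det_block_comm k (A B C D : 'M[R]_k) : C *m D = D *m C ->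
  \det (block_mx A B C D) * \det D = \det (A *m D - B *m C) * \det D.
Proof.
move=> CD.
have E : block_mx A B C D *m block_mx D 0 (- C) 1%:M =
         block_mx (A *m D - B *m C) B 0 D.
  rewrite mulmx_block !mulmx0 !mulmx1 !add0r !mulmxN CD subrr.
  by rewrite [A *m D - _]addrC.
have := congr1 determinant E.
by rewrite det_mulmx det_lblock det1 mulr1 det_ublock mulrC => ->.
Qed.
End PolyComp.

Lemma char_poly_block_comm (R : idomainType) k (A B C D : 'M[R]_k) :
  C *m D = D *m C -> char_poly (block_mx A B C D) =
  \det (char_poly_mx A *m char_poly_mx D - map_mx polyC B *m map_mx polyC C).
Proof.
move=> CD.
have cDC : (- map_mx polyC C) *m char_poly_mx D = char_poly_mx D *m (- map_mx polyC C).
  by rewrite mulNmx mulmxN /char_poly_mx mulmxBl mulmxBr scalar_mxC -!map_mxM CD.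
apply: (mulIf (monic_neq0 (char_poly_monic D))).
rewrite /char_poly /char_poly_mx map_block_mx scalar_mx_block opp_block_mx add_block_mx.
rewrite !add0r -/(char_poly_mx A) -/(char_poly_mx D) det_block_comm //.
by rewrite mulmxN mulNmx opprK.
Qed.

Lemma mulmx_const1 (T : pzSemiRingType) k l r :
  (const_mx 1 : 'M[T]_(k, l)) *m (const_mx 1 : 'M[T]_(l, r)) = const_mx l%:R.
Proof.
apply/matrixP => i j; rewrite !mxE.
by under eq_bigr do rewrite !mxE mulr1; rewrite sumr_const card_ord.
Qed.

Section Intertwining.
Variables (T : comNzRingType) (k : nat) (S : 'M[T]_k).

Definition intertwines (A B : 'M[T]_k) := S *m A = B *m S.

Lemma intertwinesD A A' B B' :
  intertwines A A' -> intertwines B B' -> intertwines (A + B) (A' + B').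
Proof. by rewrite /intertwines mulmxDr mulmxDl => -> ->. Qed.

Lemma intertwinesB A A' B B' :
  intertwines A A' -> intertwines B B' -> intertwines (A - B) (A' - B').
Proof. by rewrite /intertwines mulmxBr mulmxBl => -> ->. Qed.

Lemma intertwinesM A A' B B' :
  intertwines A A' -> intertwines B B' -> intertwines (A *m B) (A' *m B').
Proof. by rewrite /intertwines => AA' BB'; rewrite mulmxA AA' -mulmxA BB' mulmxA. Qed.

Lemma intertwinesZ a A A' : intertwines A A' -> intertwines (a *: A) (a *: A').
Proof. by rewrite /intertwines -scalemxAr -scalemxAl => ->. Qed.

Lemma intertwines_scalar a : intertwines a%:M a%:M.
Proof. by rewrite /intertwines scalar_mxC. Qed.
End Intertwining.

Lemma intertwines_det (T : idomainType) k (S A B : 'M[T]_k) :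
  \det S != 0 -> intertwines S A B -> \det A = \det B.
Proof.
move=> S0 /(congr1 determinant); rewrite !det_mulmx [\det B * _]mulrC.
exact: mulfI.
Qed.

Section Deflation.
Variables (T : comNzRingType) (m : nat).

Definition deflator : 'M[T]_(1 + m) := block_mx 1 (const_mx 1) (- const_mx 1) 1.

Definition deflate (Q : 'M[T]_(1 + m)) : 'M_m := drsubmx Q - const_mx 1 *m ursubmx Q.

Lemma deflator_zero_sums (Q : 'M[T]_(1 + m)) :
  (const_mx 1 : 'rV_(1 + m)) *m Q = 0 -> Q *m (const_mx 1 : 'cV_(1 + m)) = 0 ->
  intertwines deflator Q (block_mx 0 0 0 (deflate Q)).
Proof.
rewrite /intertwines -[Q]submxK /deflate /deflator !(block_mxKur, block_mxKdr).
set a := ulsubmx Q; set b := ursubmx Q; set c := dlsubmx Q; set d := drsubmx Q.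
rewrite -[const_mx 1 : 'rV_(1 + m)]row_mx_const -[const_mx 1 : 'cV_(1 + m)]col_mx_const.
rewrite mul_row_block mul_block_col -row_mx0 -col_mx0.
move=> /eq_row_mx [ab0 bd0] /eq_col_mx [ab1 cd1].
have one11 : (const_mx 1 : 'M[T]_1) = 1%:M by apply/matrixP => i j; rewrite !ord1 !mxE.
rewrite one11 mul1mx in ab0; rewrite one11 mul1mx in bd0; rewrite one11 mulmx1 in ab1.
move/eqP: ab1; rewrite addrC addr_eq0 => /eqP ab1.
move/eqP: cd1; rewrite addrC addr_eq0 => /eqP cd1.
rewrite !mulmx_block !mul0mx !mul1mx !mulmx1 !add0r ?addr0 ab0 bd0 mulmxN mulmxBl cd1.
rewrite -mulmxA ab1 mulmxN opprB addrC one11 mulmx1 mulNmx opprK [c + _]addrC.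
by rewrite mulNmx [d - _]addrC.
Qed.

Lemma deflator_const :
  intertwines deflator (const_mx 1) (block_mx (1 + m)%:R%:M 0 0 0).
Proof.
rewrite /intertwines /deflator -[const_mx 1 : 'M_(1 + m)]row_mx_const.
rewrite -!col_mx_const -block_mxEh.
rewrite !mulmx_block !mul0mx !mul1mx !mulmx1 !addr0 !mulNmx !mulmx_const1 !addNr.
congr block_mx.
- by apply/matrixP => i j; rewrite !mxE !ord1 eqxx mulr1n natrD.
- by rewrite mul_scalar_mx scalemx_const mulr1; apply/matrixP => i j; rewrite !mxE natrD.
Qed.

Lemma det_deflator : \det deflator = (1 + m)%:R.
Proof.
have E : deflator *m block_mx 1 0 (const_mx 1) 1 = block_mx (1 + m)%:R%:M (const_mx 1) 0 1.
  rewrite /deflator !mulmx_block !(mul0mx, mul1mx, mulmx1, mulmx0, addr0, add0r).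
  rewrite mulmx_const1 addNr; congr block_mx.
  by apply/matrixP => i j; rewrite !mxE !ord1 eqxx mulr1n natrD.
have := congr1 determinant E.
rewrite det_mulmx det_lblock det_ublock !det1 !mulr1 => ->.
by rewrite det_mx11 mxE eqxx mulr1n.
Qed.
End Deflation.

Lemma Qp_sym (R : realType) n (Q1 : 'M[R]_n) p : Q1^T = Q1 -> (Qp Q1 p)^T = Qp Q1 p.
Proof.
move=> Q1_sym; rewrite /Qp tr_block_mx !linearD /= !linearN /= !linearZ /= ?linearB /=.
by rewrite !tr_scalar_mx /Jmx trmx_const Q1_sym.
Qed.

Section CoupledSpectrum.
Variables (R : realType) (m : nat) (Q1 : 'M[R]_(1 + m)).
Local Notation n := (1 + m)%N.
Hypothesis Q1_row : (const_mx 1 : 'rV_n) *m Q1 = 0.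
Hypothesis Q1_col : Q1 *m (const_mx 1 : 'cV_n) = 0.
Local Notation S := (deflator {poly R} m).
Local Notation q := (map_mx polyC Q1).

Let S_q : intertwines S q (block_mx 0 0 0 (map_mx polyC (deflate Q1))).
Proof.
have -> : map_mx polyC (deflate Q1) = deflate q.
  by rewrite /deflate map_mxB map_mxM map_drsubmx map_ursubmx map_const_mx rmorph1.
apply: deflator_zero_sums.
- by rewrite -(rmorph1 polyC) -map_const_mx -map_mxM Q1_row map_mx0.
- by rewrite -(rmorph1 polyC) -map_const_mx -map_mxM Q1_col map_mx0.
Qed.

Let S_J : intertwines S (map_mx polyC (Jmx R n)) (block_mx n%:R%:M 0 0 0).
Proof.
have -> : map_mx polyC (Jmx R n) = const_mx 1 by apply/matrixP => i j; rewrite !mxE.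
exact: deflator_const.
Qed.

Let det_S_neq0 : \det S != 0.
Proof. by rewrite det_deflator -polyC_natr polyC_eq0 pnatr_eq0. Qed.

Lemma char_poly_deflate : char_poly Q1 = 'X * char_poly (deflate Q1).
Proof.
rewrite /char_poly /char_poly_mx.
rewrite (intertwines_det det_S_neq0 (intertwinesB (intertwines_scalar S 'X) S_q)).
rewrite [X in X - _]scalar_mx_block opp_block_mx add_block_mx !oppr0 !addr0.
by rewrite det_ublock det_mx11 !mxE eqxx mulr1n.
Qed.

Let J_Q1 : Jmx R n *m Q1 = 0.
Proof. by rewrite /Jmx -[const_mx 1](mulmx_const1 R n 1 n) -mulmxA Q1_row mulmx0. Qed.

Let Q1_J : Q1 *m Jmx R n = 0.
Proof. by rewrite /Jmx -[const_mx 1](mulmx_const1 R n 1 n) mulmxA Q1_col mul0mx. Qed.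

Lemma char_poly_Qp p : char_poly (Qp Q1 p) =
  'X * ('X - (2 * n%:R * p)%:P) *
  ((char_poly (deflate Q1) \Po ('X - (n%:R * p)%:P)) *
   ((-1) ^+ m * (char_poly (deflate Q1) \Po ((n%:R + n%:R * p)%:P - 'X)))).
Proof.
set c := n%:R * p; set D := n%:R%:M - Jmx R n - Q1 + c%:M.
set M := map_mx polyC (deflate Q1).
have JD : (- (p *: Jmx R n)) *m D = D *m (- (p *: Jmx R n)).
  rewrite /D mulNmx mulmxN -scalemxAl -scalemxAr; congr (- (_ *: _)).
  by rewrite !(mulmxDr, mulmxDl, mulmxN, mulNmx) J_Q1 Q1_J !scalar_mxC.
rewrite /Qp char_poly_block_comm // !map_mxN mulNmx mulmxN opprK.
have SA : intertwines S (char_poly_mx (Q1 + c%:M)) ('X%:M - (block_mx 0 0 0 M + c%:P%:M)).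
  rewrite /char_poly_mx map_mxD map_scalar_mx.
  exact: intertwinesB (intertwines_scalar _ _) (intertwinesD S_q (intertwines_scalar _ _)).
have SD : intertwines S (char_poly_mx D)
    ('X%:M - ((n%:R : R)%:P%:M - block_mx n%:R%:M 0 0 0 - block_mx 0 0 0 M + c%:P%:M)).
  rewrite /char_poly_mx /D !(map_mxD, map_mxN) !map_scalar_mx.
  apply: intertwinesB (intertwines_scalar _ _) _.
  apply: intertwinesD (intertwines_scalar _ _); apply: intertwinesB S_q.
  exact: intertwinesB (intertwines_scalar _ _) S_J.
have SB : intertwines S (map_mx polyC (p *: Jmx R n)) (p%:P *: block_mx n%:R%:M 0 0 0).
  by rewrite map_mxZ; exact: intertwinesZ S_J.
have S_prod := intertwinesB (intertwinesM SA SD) (intertwinesM SB SB).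
rewrite (intertwines_det det_S_neq0 S_prod).
rewrite !scalar_mx_block !scale_block_mx !(opp_block_mx, add_block_mx) !mulmx_block.
rewrite !(oppr0, scaler0, mulmx0, mul0mx, addr0, add0r, subr0, sub0r).
rewrite opp_block_mx add_block_mx !(oppr0, addr0) det_ublock det_mulmx.
have XcM : 'X%:M - (M + c%:P%:M) = ('X - c%:P)%:M - M.
  by apply/matrixP => i j; rewrite !mxE; case: (i == j); rewrite ?mulr1n ?mulr0n; ring.
have XncM : 'X%:M - ((n%:R : R)%:P%:M - M + c%:P%:M) =
             - (((n%:R : R)%:P + c%:P - 'X)%:M - M).
  by apply/matrixP => i j; rewrite !mxE; case: (i == j); rewrite ?mulr1n ?mulr0n; ring.
rewrite XcM XncM -[- (_ - M)]scaleN1r detZ -!char_poly_comp; congr (_ * _).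
- rewrite det_mx11 !mxE big_ord1 !mxE !eqxx !mulr1n big_ord1 !mxE /c !polyCM !polyC_natr.
  by rewrite (_ : (0 == ord0 :> 'I_1) = true) // !mulr1n; ring.
- by rewrite polyCD.
Qed.
End CoupledSpectrum.

Section Laplacian.
Variables (R : realType) (n : nat) (e : rel 'I_n).
Hypotheses (e_sym : symmetric e) (e_irr : irreflexive e).
Local Notation L := (laplacian R e).
Local Notation a i j := ((e i j)%:R : R).

Definition degree i : R := \sum_k a i k.

Lemma laplacianE i j : L i j = (if i == j then degree i else 0) - a i j.
Proof.
rewrite mxE.
have -> : (#|[set k | e i k]|)%:R = degree i.
  rewrite -sum1_card natr_sum big_mkcond /=; apply: eq_bigr => k _.
  by rewrite inE; case: (e i k).
case: eqP => [<-|_]; last by rewrite sub0r.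
by rewrite e_irr subr0.
Qed.

Lemma laplacian_sym : L^T = L.
Proof.
apply/matrixP => i j; rewrite mxE !laplacianE e_sym eq_sym.
by case: eqP => // ->.
Qed.

Lemma laplacian_col : L *m (const_mx 1 : 'cV_n) = 0.
Proof.
apply/matrixP => i j; rewrite !mxE.
under eq_bigr do rewrite [X in _ * X]mxE mulr1 laplacianE.
rewrite sumrB (bigD1 i) //= eqxx big1 ?addr0 ?subrr // => k /negbTE.
by rewrite eq_sym => ->.
Qed.

Lemma laplacian_row : (const_mx 1 : 'rV_n) *m L = 0.
Proof. by rewrite -laplacian_sym -trmx_const -trmx_mul laplacian_col trmx0. Qed.

Lemma laplacian_form (w : 'I_n -> R) :
  2 * \sum_j \sum_i w i * L i j * w j = \sum_j \sum_i a i j * (w i - w j) ^+ 2.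
Proof.
have half j : \sum_i w i * L i j * w j = \sum_i a i j * (w j ^+ 2 - w i * w j).
  under eq_bigr do rewrite laplacianE.
  transitivity (\sum_i ((if i == j then degree i else 0) * w i * w j) -
                \sum_i a i j * w i * w j).
    by rewrite -sumrB; apply: eq_bigr => i _; set d := (if _ then _ else _); ring.
  rewrite (bigD1 j) //= eqxx big1 ?addr0; last by move=> i /negbTE ->; rewrite !mul0r.
  by rewrite /degree !mulr_suml -sumrB; apply: eq_bigr => i _; rewrite [e j i]e_sym; ring.
have swap : \sum_j \sum_i a i j * (w j ^+ 2 - w i * w j) =
            \sum_j \sum_i a i j * (w i ^+ 2 - w i * w j).
  rewrite exchange_big /=; apply: eq_bigr => j _; apply: eq_bigr => i _.
  by rewrite [e j i]e_sym; ring.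
rewrite (eq_bigr _ (fun j _ => half j)) mulr_natl mulr2n {2}swap -big_split /=.
by apply: eq_bigr => j _; rewrite -big_split /=; apply: eq_bigr => i _; ring.
Qed.

Lemma sum_sqr_diff_le (w : 'I_n -> R) :
  \sum_j \sum_i (w i - w j) ^+ 2 <= 2 * n%:R * \sum_j w j ^+ 2.
Proof.
set W := \sum_i w i; set S2 := \sum_j w j ^+ 2.
have inner j : \sum_i (w i - w j) ^+ 2 = S2 - 2 * w j * W + n%:R * w j ^+ 2.
  transitivity (\sum_i (w i ^+ 2 - 2 * w j * w i + w j ^+ 2)).
    by apply: eq_bigr => i _; ring.
  by rewrite big_split sumrB /= -mulr_sumr sumr_const card_ord -/S2 -/W !mulr_natl.
rewrite (eq_bigr _ (fun j _ => inner j)) big_split sumrB /= -mulr_suml -mulr_sumr.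
rewrite sumr_const card_ord -/S2 -/W -mulr_sumr -/S2 -mulr_natl.
by have := sqr_ge0 W; rewrite expr2; nra.
Qed.

Lemma laplacian_eigenvalue_bounds x : eigenvalue L x -> 0 <= x <= n%:R.
Proof.
move=> /eigenvalueP [v vL v0]; pose w i := v 0 i.
have form : \sum_j \sum_i w i * L i j * w j = x * \sum_j w j ^+ 2.
  rewrite mulr_sumr; apply: eq_bigr => j _.
  have := congr1 (fun u : 'rV[R]_n => u 0 j) vL; rewrite !mxE => vLj.
  by rewrite -mulr_suml vLj expr2 mulrA.
have w_pos : 0 < \sum_j w j ^+ 2.
  have [i wi | w0] := pickP (fun i => w i != 0); last first.
    by case/eqP: v0; apply/matrixP => a b; rewrite ord1 mxE; apply/eqP/negbFE/w0.
  rewrite (bigD1 i) //= ltr_wpDr ?sumr_ge0 // => [j _|]; first exact: sqr_ge0.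
  by rewrite lt0r sqrf_eq0 wi sqr_ge0.
have edges_ge0 : 0 <= \sum_j \sum_i a i j * (w i - w j) ^+ 2.
  by do 2!apply: sumr_ge0 => ? _; rewrite mulr_ge0 ?sqr_ge0 ?ler0n.
have edges_le : \sum_j \sum_i a i j * (w i - w j) ^+ 2 <= 2 * n%:R * \sum_j w j ^+ 2.
  apply: le_trans (sum_sqr_diff_le w); do 2!apply: ler_sum => ? _.
  by case: (e _ _); rewrite ?mul1r ?mul0r ?sqr_ge0.
move: edges_ge0 edges_le; rewrite -laplacian_form form.
set S2 := \sum_j w j ^+ 2 in w_pos * => *; apply/andP; split; nra.
Qed.
End Laplacian.

Section NonincreasingSeq.
Variable R : realDomainType.
Local Notation ge := (fun x y : R => y <= x).

Lemma sorted_ge_head_max (t : seq R) x : sorted ge t -> x \in t -> x <= t`_0.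
Proof.
case: t => [//|y t] /= /(order_path_min ge_trans) /allP t_le.
by rewrite in_cons => /predU1P [->|/t_le].
Qed.

Lemma sorted_ge_last_min (t : seq R) x : sorted ge (rcons t x) -> all (>= x) t.
Proof.
rewrite -rev_sorted rev_rcons /= => /(order_path_min le_trans).
by rewrite all_rev.
Qed.

Lemma second_smallest_min (t r : seq R) z :
  sorted ge t -> perm_eq t (z :: r) -> all (>= z) r -> r != [::] ->
  t`_(size t).-2 \in r /\ all (>= t`_(size t).-2) r.
Proof.
move=> t_sorted t_perm z_min r_n0.
case/lastP: t t_sorted t_perm => [|t' w] t_sorted t_perm; first by move/perm_size: t_perm.
have w_z : w = z.
  have zin : z \in rcons t' w by rewrite (perm_mem t_perm) mem_head.
  have win : w \in z :: r by rewrite -(perm_mem t_perm) mem_rcons mem_head.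
  apply/le_anti/andP; split.
  - move: zin; rewrite mem_rcons in_cons => /predU1P [-> //|].
    exact/allP/sorted_ge_last_min.
  - by move: win; rewrite in_cons => /predU1P [-> //|/(allP z_min)].
subst w; have t'_perm : perm_eq t' r by rewrite perm_rcons perm_cons in t_perm.
have t'_sorted : sorted ge t' := subseq_sorted ge_trans (subseq_rcons t' z) t_sorted.
case/lastP: t' t'_sorted t'_perm {t_perm} t_sorted => [|t'' v] t'_sorted t'_perm t_sorted.
  by move/perm_size: t'_perm; case: r r_n0 {z_min}.
have -> : (rcons (rcons t'' v) z)`_(size (rcons (rcons t'' v) z)).-2 = v.
  by rewrite !size_rcons /= !nth_rcons size_rcons ltnS leqnn ltnn eqxx.
split; first by rewrite -(perm_mem t'_perm) mem_rcons mem_head.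
by rewrite -(perm_all _ t'_perm) all_rcons lexx /= sorted_ge_last_min.
Qed.

Lemma second_smallest_eq (t r : seq R) z a :
  sorted ge t -> perm_eq t (z :: a :: r) -> z <= a -> all (>= z) r ->
  t`_(size t).-2 = a <-> all (>= a) r.
Proof.
move=> t_sorted t_perm za z_min.
have [b_in b_min] := second_smallest_min t_sorted t_perm (introT andP (conj za z_min)) isT.
split=> [<-|a_min]; first by case/andP: b_min.
apply/le_anti/andP; split; first by case/andP: b_min.
by move: b_in; rewrite in_cons => /predU1P [->|/(allP a_min)].
Qed.
End NonincreasingSeq.

Lemma sup_eq_max (R : realType) (E : set R) x : E x -> ubound E x -> sup E = x.
Proof.
move=> Ex x_ub; apply/le_anti/andP; split; first by apply: ge_sup => //; exists x.
exact: (ub_le_sup (ex_intro _ x x_ub)).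
Qed.

Section CouplingThreshold.
Variables (R : realType) (m : nat) (Q1 : 'M[R]_(1 + m)).
Local Notation n := (1 + m)%N.
Hypothesis m_gt0 : (0 < m)%N.
Hypothesis Q1_sym : Q1^T = Q1.
Hypothesis Q1_row : (const_mx 1 : 'rV_n) *m Q1 = 0.
Hypothesis Q1_eig : forall x, eigenvalue Q1 x -> 0 <= x <= n%:R.
Local Notation s := (rem 0 (eigs Q1)).

Let Q1_col : Q1 *m (const_mx 1 : 'cV_n) = 0.
Proof. by rewrite -Q1_sym -trmx_const -trmx_mul Q1_row trmx0. Qed.

Let eigs_Q1 := is_spectrum_eigs Q1_sym.

Lemma perm_eigs_deflate : perm_eq (eigs Q1) (0 :: s).
Proof.
apply: perm_to_rem; rewrite -root_prod_XsubC; have [_ _ <-] := eigs_Q1.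
by rewrite char_poly_deflate // rootM rootX eqxx.
Qed.

Let size_s : size s = m.
Proof.
have [size_eigs _ _] := eigs_Q1.
by have := perm_size perm_eigs_deflate; rewrite size_eigs => -[].
Qed.

Lemma char_poly_deflate_eigs : char_poly (deflate Q1) = \prod_(x <- s) ('X - x%:P).
Proof.
apply: (@mulfI _ ('X - 0%:P)); first by rewrite polyXsubC_eq0.
have [_ _ char_Q1] := eigs_Q1.
rewrite polyC0 subr0 -char_poly_deflate // char_Q1 (perm_big _ perm_eigs_deflate).
by rewrite big_cons polyC0 subr0.
Qed.

Let s_bounds : all (fun x => 0 <= x <= n%:R) s.
Proof.
apply/allP => x x_s; apply: Q1_eig; have [_ _ char_Q1] := eigs_Q1.
rewrite eigenvalue_root_char char_Q1 root_prod_XsubC (perm_mem perm_eigs_deflate).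
by rewrite in_cons x_s orbT.
Qed.

Lemma eigs_Qp p : perm_eq (eigs (Qp Q1 p))
  (0 :: 2 * (n%:R * p) ::
   [seq x + n%:R * p | x <- s] ++ [seq n%:R + n%:R * p - x | x <- s]).
Proof.
have [_ _ char_Qp] := is_spectrum_eigs (Qp_sym p Q1_sym).
apply: prod_XsubC_eq; rewrite -char_Qp char_poly_Qp // char_poly_deflate_eigs.
rewrite comp_prod_XsubC_shift -[X in (-1) ^+ X]size_s comp_prod_XsubC_reflect.
by rewrite !big_cons big_cat !big_map /= polyC0 subr0 !mulrA.
Qed.

Lemma mu_Qp_eq p : 0 < p -> mu (Qp Q1 p) (n + n).-1 = 2 * n%:R * p <->
  all (fun x => n%:R * p <= x <= n%:R - n%:R * p) s.
Proof.
move=> p_gt0; have [size_Qp sorted_Qp _] := is_spectrum_eigs (Qp_sym p Q1_sym).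
have np_gt0 : 0 < n%:R * p by rewrite mulr_gt0 // ltr0n.
rewrite /mu -mulrA (_ : (n + n).-1.-1 = (size (eigs (Qp Q1 p))).-2); last first.
  by rewrite size_Qp.
rewrite (second_smallest_eq sorted_Qp (eigs_Qp p)); last 2 first.
- lra.
- rewrite all_cat !all_map; apply/andP.
  by split; apply/allP => x /(allP s_bounds) /= x_bd; lra.
rewrite all_cat !all_map; split.
- case/andP => /allP lo /allP hi; apply/allP => x x_s.
  by have := lo x x_s; have := hi x x_s; rewrite /= => ? ?; apply/andP; split; lra.
- by move=> /allP bd; apply/andP; split; apply/allP => x /bd /andP [? ?] /=; lra.
Qed.

Lemma deflated_eigs_within c d :
  all (fun x => c <= x <= d) s <-> c <= mu Q1 m /\ mu Q1 1 <= d.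
Proof.
have [size_eigs sorted_eigs _] := eigs_Q1.
have s_ge0 : all (>= 0) s by apply/allP => x /(allP s_bounds) /andP [].
have s_n0 : s != [::] by rewrite -size_eq0 size_s -lt0n.
have [lam2_s lam2_min] := second_smallest_min sorted_eigs perm_eigs_deflate s_ge0 s_n0.
have -> : mu Q1 m = (eigs Q1)`_(size (eigs Q1)).-2 by rewrite /mu size_eigs.
have lam1_max x : x \in s -> x <= mu Q1 1.
  move=> x_s; apply: sorted_ge_head_max sorted_eigs _.
  by rewrite (perm_mem perm_eigs_deflate) in_cons x_s orbT.
set lam2 := (eigs Q1)`_ _ in lam2_s lam2_min *.
split=> [/allP bd | [c_lam2 lam1_d]].
- have /andP [c_lam2 lam2_d] := bd _ lam2_s; split => //.
  have : mu Q1 1 \in 0 :: s by rewrite -(perm_mem perm_eigs_deflate) mem_nth // size_eigs.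
  rewrite in_cons => /predU1P [-> | /bd /andP [] //].
  exact: le_trans (allP s_ge0 _ lam2_s) lam2_d.
- apply/allP => x x_s; rewrite (le_trans c_lam2 (allP lam2_min x x_s)) /=.
  exact: le_trans (lam1_max x x_s) lam1_d.
Qed.

Theorem pstar_eq : pstar Q1 = Num.min (mu Q1 m / n%:R) (1 - mu Q1 1 / n%:R).
Proof.
have n_gt0 : 0 < n%:R :> R by rewrite ltr0n.
have [lam2_ge0 lam1_le] : 0 <= mu Q1 m /\ mu Q1 1 <= n%:R.
  by apply/deflated_eigs_within/allP => x /(allP s_bounds).
rewrite (_ : 1 - mu Q1 1 / n%:R = (n%:R - mu Q1 1) / n%:R); last first.
  by field; rewrite paddr_eq0 ?ler0n // oner_eq0.
set ps := Num.min _ _.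
have ps_ge0 : 0 <= ps.
  by rewrite le_min; apply/andP; split; apply: divr_ge0; rewrite ?subr_ge0 // ltW.
have admissible p : 0 < p -> mu (Qp Q1 p) (n + n).-1 = 2 * n%:R * p <-> p <= ps.
  move=> p_gt0; rewrite mu_Qp_eq // deflated_eigs_within le_min !ler_pdivlMr //.
  by split=> [[? ?] | /andP [? ?]]; [apply/andP|]; split; nra.
rewrite /pstar; apply: sup_eq_max => [|p [->|[p_gt0 /(admissible _ p_gt0)]] //].
have [ps_gt0|ps_le0] := ltP 0 ps; first by right; split; last apply/admissible.
by left; apply/le_anti; rewrite ps_le0.
Qed.
End CouplingThreshold.

Theorem mainTheorem6 (R : realType) (n : nat) (e : rel 'I_n) :
  (2 <= n)%N -> simple_graph e ->
  pstar (laplacian R e) =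
    Num.min (mu (laplacian R e) n.-1 / n%:R) (1 - mu (laplacian R e) 1 / n%:R).
Proof.
case: n e => [|m] e // n_ge2 [e_sym e_irr].
apply: pstar_eq => //.
- exact: laplacian_sym.
- exact: laplacian_row.
- exact: laplacian_eigenvalue_bounds.
Qed.
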